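(* Let $Q=\{q_1,\dots,q_N\}$ be a finite set of binary questions, and for each $i$ let $(x_i^+,x_i^-)$ be the contrast pair of input texts corresponding to $q_i$. Let $h:Q\to\{0,1\}$ be an arbitrary map. Define the probe $p$ by $p(x_i^+)=h(q_i)$ and $p(x_i^-)=1-h(q_i)$ for all $i$. Then $p$ attains the optimal (minimum possible) value of the CCS loss $$\mathcal{L}_{\mathrm{CCS}}(p)=\sum_{i=1}^N\Big(\big[p(x_i^+)-(1-p(x_i^-))\big]^2+\min\{p(x_i^+),p(x_i^-)\}^2\Big)$$ over all probes, and its averaged prediction satisfies $\tilde p(q_i)=\tfrac12\big[p(x_i^+)+(1-p(x_i^-))\big]=h(q_i)$ for every $i$.
   Context: A probe is any function $p$ assigning to each input text $x_i^+$, $x_i^-$ ($i=1,\dots,N$) a real number in $[0,1]$. The CCS (contrast-consistent search) loss of a probe is the sum displayed in the claim, consisting of a consistency term $[p(x_i^+)-(1-p(x_i^-))]^2$ and a confidence term $\min\{p(x_i^+),p(x_i^-)\}^2$ for each question. The averaged prediction of a probe on question $q_i$ is $\tilde p(q_i)=\tfrac12[p(x_i^+)+(1-p(x_i^-))]$. *)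

From mathcomp Require Import all_boot all_order all_algebra.
Set Implicit Arguments. Unset Strict Implicit. Unset Printing Implicit Defensive.
Import Order.TTheory GRing.Theory Num.Theory.
Local Open Scope ring_scope.

(* The 2N input texts are x_i^+ (encoded (i, true)) and x_i^- (encoded (i, false)).
   A probe assigns a real number to every input text. *)
Definition probe (R : realFieldType) (N : nat) := 'I_N -> bool -> R.

Definition is_probe (R : realFieldType) (N : nat) (p : probe R N) : Prop :=
  forall i b, 0 <= p i b <= 1.

Definition ccs_loss (R : realFieldType) (N : nat) (p : probe R N) : R :=
  \sum_(i < N) ((p i true - (1 - p i false)) ^+ 2
                + (Num.min (p i true) (p i false)) ^+ 2).

Definition avg_pred (R : realFieldType) (N : nat) (p : probe R N) (i : 'I_N) : R :=
  (p i true + (1 - p i false)) / 2.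

Definition probe_of_h (R : realFieldType) (N : nat) (h : 'I_N -> bool) : probe R N :=
  fun i b => if b then (h i)%:R else 1 - (h i)%:R.

(* The probe built from h is perfectly consistent (p(x^-) = 1 - p(x^+)) and
   perfectly confident (one of p(x^+), p(x^-) is 0), so both terms of every
   summand vanish and its loss is 0, the least value of a sum of squares.
   Consistency also makes the averaged prediction equal to p(x^+) = h(q). *)
From mathcomp Require Import all_boot all_order all_algebra.
Import Order.TTheory GRing.Theory Num.Theory.
Local Open Scope ring_scope.

Section CCS.

Variables (R : realFieldType) (N : nat).

Lemma min_nat_bool_subr (b : bool) : Num.min (b%:R : R) (1 - b%:R) = 0.
Proof. by case: b; rewrite /= ?subrr ?subr0 /Num.min ?ltr10 ?ltr01. Qed.

Lemma ccs_loss_ge0 (p : probe R N) : 0 <= ccs_loss p.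
Proof. by apply: sumr_ge0 => i _; rewrite addr_ge0 ?sqr_ge0. Qed.

Lemma avg_pred_consistent (p : probe R N) (i : 'I_N) :
  p i false = 1 - p i true -> avg_pred p i = p i true.
Proof.
move=> pF; rewrite /avg_pred pF subKr -mulr2n -(mulr_natr (p i true) 2).
by rewrite mulfK ?pnatr_eq0.
Qed.

Variable h : 'I_N -> bool.

Lemma is_probe_of_h : is_probe (probe_of_h R h).
Proof.
move=> i [|]; rewrite /probe_of_h; case: (h i);
  by rewrite /= ?subrr ?subr0 lexx ler01.
Qed.

Lemma ccs_loss_probe_of_h : ccs_loss (probe_of_h R h) = 0.
Proof.
rewrite /ccs_loss big1 // => i _.
by rewrite /probe_of_h /= subKr subrr min_nat_bool_subr expr0n addr0.
Qed.

Lemma avg_pred_probe_of_h (i : 'I_N) : avg_pred (probe_of_h R h) i = (h i)%:R.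
Proof. exact: avg_pred_consistent. Qed.

End CCS.

Theorem theorem1 (R : realFieldType) (N : nat) (h : 'I_N -> bool) :
  is_probe (probe_of_h R h) /\
  (forall q : probe R N, is_probe q -> ccs_loss (probe_of_h R h) <= ccs_loss q) /\
  (forall i : 'I_N, avg_pred (probe_of_h R h) i = (h i)%:R).
Proof.
split; first exact: is_probe_of_h.
split; last exact: avg_pred_probe_of_h.
by move=> q _; rewrite ccs_loss_probe_of_h ccs_loss_ge0.
Qed.
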